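(* Let $n,m\in\mathbb{N}$ be fixed. Then $\approx_{\mathrm{sa}}\subset\approx_{\mathrm{sc}}$ as relations on $\mathrm{IS}^{\mathrm{br}}_{n,m}$, i.e. $\approx_{\mathrm{sa}}$ is a proper subset of $\approx_{\mathrm{sc}}$.
   Context: Foci (register names) are $\mathrm{in}_i,\mathrm{aux}_i,\mathrm{out}_i$ for $i\ge1$; methods are $\mathrm{set}{:}0,\mathrm{set}{:}1,\mathrm{get}$. Basic instructions: $\mathrm{BI}_{n,m}=\{f.\mathrm{get}\mid f\in\{\mathrm{in}_1..\mathrm{in}_n\}\cup\{\mathrm{aux}_i\mid i\ge1\}\}\cup\{f.\mathrm{set}{:}b\mid f\in\{\mathrm{aux}_i\mid i\ge1\}\cup\{\mathrm{out}_1..\mathrm{out}_m\},b\in\{0,1\}\}$; $\mathrm{focus}(f.m)=f$. Primitive instructions: for $a\in\mathrm{BI}_{n,m}$ the plain instruction $a$, positive test $+a$, negative test $-a$; forward jumps $\#l$ ($l\in\mathbb{N}$); termination $!$. $\mathrm{IS}^{\mathrm{br}}_{n,m}$ is the set of finite nonempty sequences $u_1;\dots;u_k$ of primitive instructions. Threads: finite terms built from $\mathsf S$, $\mathsf D$ and $x\trianglelefteq a\trianglerighteq y$ for basic actions $a$ (the $f.m$ and trace actions $\langle f.m\rangle r$, $r\in\{0,1\}$), equal iff syntactically equal; $a\circ x$ abbreviates $x\trianglelefteq a\trianglerighteq x$. Thread extraction ($u$ primitive, $X$ nonempty sequence): $|a|=a\circ\mathsf D$, $|a;X|=a\circ|X|$,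 $|{+a}|=|{-a}|=a\circ\mathsf D$, $|{+a};X|=|X|\trianglelefteq a\trianglerighteq|\#2;X|$, $|{-a};X|=|\#2;X|\trianglelefteq a\trianglerighteq|X|$, $|\#l|=\mathsf D$, $|\#0;X|=\mathsf D$, $|\#1;X|=|X|$, $|\#(l+2);u|=\mathsf D$, $|\#(l+2);u;X|=|\#(l+1);X|$, $|!|=|!;X|=\mathsf S$. A register family $F$ is a finite set of pairs $f.\mathrm{BR}_b$ ($b\in\{0,1\}$) with distinct foci. Processing $m$ on $\mathrm{BR}_b$: $\mathrm{set}{:}c$ gives reply $c$ and new content $c$; $\mathrm{get}$ gives reply $b$, content unchanged. If $f.\mathrm{BR}_b\in F$ and $m$ gives reply $r$ and new content $b'$, $F'$ is $F$ with $f.\mathrm{BR}_b$ replaced by $f.\mathrm{BR}_{b'}$. Tracking use: $\mathrm{tuse}(\mathsf S,F)=\mathsf S$, $\mathrm{tuse}(\mathsf D,F)=\mathsf D$; if $f$ is not a focus in $F$, $\mathrm{tuse}(x\trianglelefteq f.m\trianglerighteq y,F)=\mathrm{tuse}(x,F)\trianglelefteq f.m\trianglerighteq\mathrm{tuse}(y,F)$; otherwise it equals $\langle f.m\rangle 1\circ\mathrm{tuse}(x,F')$ if $r=1$ and $\langle f.m\rangle 0\circ\mathrm{tuse}(y,F')$ if $r=0$; $\mathrm{tuse}(x\trianglelefteq\langle f.m\rangle r\trianglerighteq y,F)=\langle f.m\rangle r\circ\mathrm{tuse}(x,F)$. Equivalences on $\mathrm{IS}^{\mathrm{br}}_{n,m}$: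 $X\approx_{\mathrm b}Y$ iff $|X|=|Y|$. $X\approx_{\mathrm x}Y$ iff $Y=\chi_I(X)$ for a finite $I\subset\mathbb{N}_{>0}$, where $\chi_I$ acts instruction-wise: for $f=\mathrm{aux}_i$, $i\in I$: $f.m\mapsto f.\chi''(m)$, $+f.m\mapsto-f.\chi''(m)$, $-f.m\mapsto+f.\chi''(m)$ with $\chi''$ swapping $\mathrm{set}{:}0,\mathrm{set}{:}1$ and fixing $\mathrm{get}$; other instructions unchanged. $X\approx_{\mathrm r}Y$ iff $Y=\rho_r(X)$ for a bijection $r$ of $\mathbb{N}_{>0}$, $\rho_r$ replacing each focus $\mathrm{aux}_i$ by $\mathrm{aux}_{r(i)}$ instruction-wise. $X\approx_{\mathrm t}Y$ iff $|X|\approx'_{\mathrm t}|Y|$, where $\approx'_{\mathrm t}$ is the smallest relation on finite threads over $\mathrm{BI}_{n,m}$ such that: if $\mathrm{focus}(a)\ne\mathrm{focus}(b)$ then $(x\trianglelefteq b\trianglerighteq y)\trianglelefteq a\trianglerighteq(x'\trianglelefteq b\trianglerighteq y')\approx'_{\mathrm t}(x\trianglelefteq a\trianglerighteq x')\trianglelefteq b\trianglerighteq(y\trianglelefteq a\trianglerighteq y')$; it is reflexive and transitive; and it is a congruence for $\cdot\trianglelefteq a\trianglerighteq\cdot$. Computational trace equivalence: $X\approx_{\mathrm{ct}}Y$ iff for all $b_1,\dots,b_n\in\{0,1\}$, $\mathrm{tuse}(|X|,\{\mathrm{in}_i.\mathrm{BR}_{b_i}\mid 1\le i\le n\})=\mathrm{tuse}(|Y|,\{\mathrm{in}_i.\mathrm{BR}_{b_i}\mid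 1\le i\le n\})$. The structural algorithmic equivalence $\approx_{\mathrm{sa}}$ is the smallest transitive relation containing $\approx_{\mathrm b},\approx_{\mathrm x},\approx_{\mathrm r},\approx_{\mathrm t}$; the structural computational equivalence $\approx_{\mathrm{sc}}$ is the smallest transitive relation containing $\approx_{\mathrm{ct}},\approx_{\mathrm x},\approx_{\mathrm r},\approx_{\mathrm t}$. *)

From Stdlib Require Import List Arith Bool.
Import ListNotations.

Inductive focus : Type := Fin (i : nat) | Faux (i : nat) | Fout (i : nat).
Inductive meth : Type := Set0 | Set1 | Get.

Definition focus_eq_dec (f g : focus) : {f = g} + {f <> g}.
Proof. decide equality; apply Nat.eq_dec. Defined.

Definition binstr : Type := (focus * meth)%type.
Definition focus_of (a : binstr) : focus := fst a.

Definition in_BI (n m : nat) (a : binstr) : Prop :=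
  match a with
  | (Fin i, Get) => 1 <= i <= n
  | (Faux i, _) => 1 <= i
  | (Fout i, Set0) => 1 <= i <= m
  | (Fout i, Set1) => 1 <= i <= m
  | _ => False
  end.

Inductive prim : Type :=
| Plain (a : binstr)
| PTest (a : binstr)
| NTest (a : binstr)
| Jump (l : nat)
| Term.

Definition prim_ok (n m : nat) (u : prim) : Prop :=
  match u with
  | Plain a | PTest a | NTest a => in_BI n m a
  | _ => True
  end.

Definition IS (n m : nat) (X : list prim) : Prop :=
  X <> [] /\ Forall (prim_ok n m) X.

Inductive action : Type :=
| BA (a : binstr)
| TA (a : binstr) (r : bool).

Inductive thread : Type :=
| TS
| TD
| Post (x : thread) (a : action) (y : thread).

Definition pre (a : action) (x : thread) : thread := Post x a x.

(* one step of extraction for u;X' given r l = |#l;X'| (= D if X' empty) *)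
Definition ext_step (u : prim) (r : nat -> thread) : thread :=
  match u with
  | Plain a => pre (BA a) (r 1)
  | PTest a => Post (r 1) (BA a) (r 2)
  | NTest a => Post (r 2) (BA a) (r 1)
  | Jump l => r l
  | Term => TS
  end.

(* jmpf X l = |#l;X| for X nonempty, and = |#l| = D for X empty.
   In particular jmpf X 1 = |X| for X nonempty. *)
Fixpoint jmpf (X : list prim) (l : nat) {struct X} : thread :=
  match X with
  | [] => TD
  | u :: X' =>
      match l with
      | 0 => TD
      | 1 => ext_step u (jmpf X')
      | S (S k) => jmpf X' (S k)
      end
  end.

Definition extract (X : list prim) : thread := jmpf X 1.

(* processing method mm on BR_b: (reply, new content) *)
Definition process (mm : meth) (b : bool) : bool * bool :=
  match mm with
  | Set0 => (false, false)
  | Set1 => (true, true)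
  | Get => (b, b)
  end.

(* a register family: partial map from foci to contents (distinct foci) *)
Definition family := focus -> option bool.

Definition update (F : family) (f : focus) (b : bool) : family :=
  fun g => if focus_eq_dec g f then Some b else F g.

Fixpoint tuse (t : thread) (F : family) {struct t} : thread :=
  match t with
  | TS => TS
  | TD => TD
  | Post x (BA (f, mm)) y =>
      match F f with
      | None => Post (tuse x F) (BA (f, mm)) (tuse y F)
      | Some b =>
          let (r, b') := process mm b in
          if r then pre (TA (f, mm) true) (tuse x (update F f b'))
          else pre (TA (f, mm) false) (tuse y (update F f b'))
      end
  | Post x (TA a r) y => pre (TA a r) (tuse x F)
  end.

Definition in_family (n : nat) (b : nat -> bool) : family :=
  fun f => match f with
           | Fin i => if (1 <=? i) && (i <=? n) then Some (b i) else None
           | _ => None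
           end.

Definition eq_b (n m : nat) (X Y : list prim) : Prop :=
  IS n m X /\ IS n m Y /\ extract X = extract Y.

Definition chi_meth (mm : meth) : meth :=
  match mm with Set0 => Set1 | Set1 => Set0 | Get => Get end.

Definition chi_prim (I : list nat) (u : prim) : prim :=
  match u with
  | Plain (Faux i, mm) =>
      if existsb (Nat.eqb i) I then Plain (Faux i, chi_meth mm) else u
  | PTest (Faux i, mm) =>
      if existsb (Nat.eqb i) I then NTest (Faux i, chi_meth mm) else u
  | NTest (Faux i, mm) =>
      if existsb (Nat.eqb i) I then PTest (Faux i, chi_meth mm) else u
  | _ => u
  end.

Definition eq_x (n m : nat) (X Y : list prim) : Prop :=
  IS n m X /\ IS n m Y /\
  exists I : list nat, (forall i, List.In i I -> 0 < i) /\ Y = map (chi_prim I) X.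

Definition rho_binstr (r : nat -> nat) (a : binstr) : binstr :=
  match a with
  | (Faux i, mm) => (Faux (r i), mm)
  | _ => a
  end.

Definition rho_prim (r : nat -> nat) (u : prim) : prim :=
  match u with
  | Plain a => Plain (rho_binstr r a)
  | PTest a => PTest (rho_binstr r a)
  | NTest a => NTest (rho_binstr r a)
  | _ => u
  end.

Definition pos_bijection (r : nat -> nat) : Prop :=
  (forall i, 0 < i -> 0 < r i) /\
  exists s : nat -> nat,
    forall i, 0 < i -> 0 < s i /\ r (s i) = i /\ s (r i) = i.

Definition eq_r (n m : nat) (X Y : list prim) : Prop :=
  IS n m X /\ IS n m Y /\
  exists r : nat -> nat, pos_bijection r /\ Y = map (rho_prim r) X.

Fixpoint thread_ok (n m : nat) (t : thread) : Prop :=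
  match t with
  | TS | TD => True
  | Post x (BA a) y => in_BI n m a /\ thread_ok n m x /\ thread_ok n m y
  | Post _ (TA _ _) _ => False
  end.

Inductive teq (n m : nat) : thread -> thread -> Prop :=
| teq_swap (a b : binstr) (x y x' y' : thread) :
    in_BI n m a -> in_BI n m b -> focus_of a <> focus_of b ->
    thread_ok n m x -> thread_ok n m y -> thread_ok n m x' -> thread_ok n m y' ->
    teq n m (Post (Post x (BA b) y) (BA a) (Post x' (BA b) y'))
            (Post (Post x (BA a) x') (BA b) (Post y (BA a) y'))
| teq_refl (t : thread) : thread_ok n m t -> teq n m t t
| teq_trans (t1 t2 t3 : thread) : teq n m t1 t2 -> teq n m t2 t3 -> teq n m t1 t3
| teq_cong (a : binstr) (x x' y y' : thread) :
    in_BI n m a -> teq n m x x' -> teq n m y y' ->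
    teq n m (Post x (BA a) y) (Post x' (BA a) y').

Definition eq_t (n m : nat) (X Y : list prim) : Prop :=
  IS n m X /\ IS n m Y /\ teq n m (extract X) (extract Y).

Definition eq_ct (n m : nat) (X Y : list prim) : Prop :=
  IS n m X /\ IS n m Y /\
  forall b : nat -> bool,
    tuse (extract X) (in_family n b) = tuse (extract Y) (in_family n b).

Inductive tclos {A : Type} (R : A -> A -> Prop) : A -> A -> Prop :=
| tc_step x y : R x y -> tclos R x y
| tc_trans x y z : tclos R x y -> tclos R y z -> tclos R x z.

Definition eq_sa (n m : nat) : list prim -> list prim -> Prop :=
  tclos (fun X Y => eq_b n m X Y \/ eq_x n m X Y \/ eq_r n m X Y \/ eq_t n m X Y).

Definition eq_sc (n m : nat) : list prim -> list prim -> Prop :=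
  tclos (fun X Y => eq_ct n m X Y \/ eq_x n m X Y \/ eq_r n m X Y \/ eq_t n m X Y).

(* Every generator of the structural algorithmic equivalence preserves the
   property "the extracted thread contains inaction D": instruction-wise
   renaming and complementation of auxiliary registers does not move jumps,
   and the swap rule only permutes subthreads.  Computational trace
   equivalence does not preserve it: in [+in1.get; +in1.get; !; #0] the
   jump [#0] is reached only if two consecutive reads of the same input
   register disagree, so replacing it by [!] leaves every computation
   unchanged while removing the only D from the thread. *)
From Stdlib Require Import List Arith Bool Lia.
Import ListNotations.

Lemma tclos_mono {A : Type} (R S : A -> A -> Prop) :
  (forall x y, R x y -> S x y) -> forall x y, tclos R x y -> tclos S x y.
Proof.
  intros RS x y H; induction H.
  - apply tc_step, RS; assumption.
  - eapply tc_trans; eassumption.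
Qed.

Lemma tclos_invariant {A : Type} (R : A -> A -> Prop) (P : A -> Prop) :
  (forall x y, R x y -> P x -> P y) -> forall x y, tclos R x y -> P x -> P y.
Proof. intros RP x y H; induction H; eauto. Qed.

Lemma eq_ct_of_eq_b n m X Y : eq_b n m X Y -> eq_ct n m X Y.
Proof. intros [HX [HY E]]; split; [exact HX | split; [exact HY |]]; intros b; rewrite E; reflexivity. Qed.

Theorem eq_sa_sub_eq_sc n m X Y : eq_sa n m X Y -> eq_sc n m X Y.
Proof.
  apply tclos_mono; intros Z W [Hb | H]; [left; apply eq_ct_of_eq_b, Hb | right; exact H].
Qed.

Fixpoint has_inaction (t : thread) : Prop :=
  match t with
  | TS => False
  | TD => True
  | Post x _ y => has_inaction x \/ has_inaction y
  end.

Lemma has_inaction_jmpf_chi I X l :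
  has_inaction (jmpf (map (chi_prim I) X) l) <-> has_inaction (jmpf X l).
Proof.
  revert l; induction X as [|u X IH]; intros l; simpl; [tauto|].
  destruct l as [|[|k]]; [tauto| |apply IH].
  destruct u as [[f mm]|[f mm]|[f mm]|j|]; simpl;
    try (destruct f; simpl; try destruct (existsb _ I)); simpl;
    rewrite ?IH; tauto.
Qed.

Lemma has_inaction_jmpf_rho r X l :
  has_inaction (jmpf (map (rho_prim r) X) l) <-> has_inaction (jmpf X l).
Proof.
  revert l; induction X as [|u X IH]; intros l; simpl; [tauto|].
  destruct l as [|[|k]]; [tauto| |apply IH].
  destruct u; simpl; rewrite ?IH; tauto.
Qed.

Lemma teq_has_inaction n m t1 t2 : teq n m t1 t2 -> has_inaction t1 -> has_inaction t2.
Proof. induction 1; simpl; tauto. Qed.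

Lemma eq_sa_has_inaction n m X Y :
  eq_sa n m X Y -> has_inaction (extract X) -> has_inaction (extract Y).
Proof.
  apply (tclos_invariant _ (fun Z => has_inaction (extract Z))); cbv beta.
  intros Z W [[_ [_ E]] | [[_ [_ [I [_ ->]]]] | [[_ [_ [r [_ ->]]]] | [_ [_ T]]]]].
  - rewrite E; trivial.
  - unfold extract; rewrite has_inaction_jmpf_chi; trivial.
  - unfold extract; rewrite has_inaction_jmpf_rho; trivial.
  - apply (teq_has_inaction _ _ _ _ T).
Qed.

Definition get_in1 : binstr := (Fin 1, Get).
Definition double_test_jump := [PTest get_in1; PTest get_in1; Term; Jump 0].
Definition double_test_term := [PTest get_in1; PTest get_in1; Term; Term].

Lemma double_test_eq_ct n m : 1 <= n -> eq_ct n m double_test_jump double_test_term.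
Proof.
  intros Hn.
  assert (Hok : forall Z, Z = double_test_jump \/ Z = double_test_term -> IS n m Z).
  { intros Z [-> | ->]; split; try discriminate; repeat constructor; simpl; lia. }
  split; [apply Hok; auto | split; [apply Hok; auto |]].
  intros b; destruct n as [|n']; [lia |].
  cbv; destruct (b 1); reflexivity.
Qed.

Lemma double_test_not_eq_sa n m : ~ eq_sa n m double_test_jump double_test_term.
Proof.
  intros H; apply eq_sa_has_inaction in H; cbv in H |- *; tauto.
Qed.

Theorem theorem2 (n m : nat) (Hn : 1 <= n) :
  (forall X Y, eq_sa n m X Y -> eq_sc n m X Y) /\
  (exists X Y, eq_sc n m X Y /\ ~ eq_sa n m X Y).
Proof.
  split; [exact (eq_sa_sub_eq_sc n m) |].
  exists double_test_jump, double_test_term; split.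
  - apply tc_step; left; apply double_test_eq_ct; exact Hn.
  - apply double_test_not_eq_sa.
Qed.
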